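(* Let $A\in\mathbb{C}^{n\times n}$, $B\in\mathbb{C}^{n\times m}$, $C\in\mathbb{C}^{p\times n}$, $D\in\mathbb{C}^{p\times m}$ and $F\in\mathbb{C}^{\nu\times\nu}$, and suppose $\mathrm{eig}(A)\cap\mathrm{eig}(F)=\emptyset$. The following statements are equivalent: (i) $\mathcal{R}_\Sigma(\lambda)$ has full column rank $n+m$ for all $\lambda\in\mathrm{eig}(F)$; (ii) for every pair $(P,Q)\in\mathbb{C}^{n\times\nu}\times\mathbb{C}^{p\times\nu}$ for which the system $$\Pi F = A\Pi + B\Psi + P,\qquad 0 = C\Pi + D\Psi + Q$$ admits a solution $(\Pi,\Psi)\in\mathbb{C}^{n\times\nu}\times\mathbb{C}^{m\times\nu}$, this solution is unique; (iii) for every pair $(\bar P,\bar Q)\in\mathbb{C}^{\nu\times n}\times\mathbb{C}^{\nu\times m}$, the system $$MA = FM + GC + \bar P,\qquad 0 = -MB + GD + \bar Q$$ admits a solution $(M,G)\in\mathbb{C}^{\nu\times n}\times\mathbb{C}^{\nu\times p}$; (iv) $\mathcal{C}_{\rm p}:\mathbb{C}^{m\times\nu}\to\mathbb{C}^{p\times\nu}$ is injective; (v) $\mathcal{C}_{\rm d}:\mathbb{C}^{\nu\times p}\to\mathbb{C}^{\nu\times m}$ is surjective. Moreover, for any $H\in\mathbb{C}^{m\times\nu}$: (a) if $(F,H)$ is observable and (i) holds, then $(F,\mathcal{C}_{\rm p}(H))$ is observable; (b) if $(F,H)$ is detectable and $\mathcal{R}_\Sigma(\lambda)$ has full column rank for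 all $\lambda\in\mathrm{eig}(F)\cap\mathbb{C}_{\geq 0}$, then $(F,\mathcal{C}_{\rm p}(H))$ is detectable. Furthermore, the converse of (a) holds provided $H\ker(\lambda I_\nu-F)=\mathbb{C}^m$ for all $\lambda\in\mathrm{eig}(F)$, and the converse of (b) holds provided $H\ker(\lambda I_\nu-F)=\mathbb{C}^m$ for all $\lambda\in\mathrm{eig}(F)\cap\mathbb{C}_{\geq 0}$.
   Context: Data: $A\in\mathbb{C}^{n\times n}$, $B\in\mathbb{C}^{n\times m}$, $C\in\mathbb{C}^{p\times n}$, $D\in\mathbb{C}^{p\times m}$, $F\in\mathbb{C}^{\nu\times\nu}$, with $\mathrm{eig}(A)\cap\mathrm{eig}(F)=\emptyset$. The Rosenbrock system matrix is $\mathcal{R}_\Sigma(\lambda)=\begin{bmatrix}A-\lambda I_n & B\\ C & D\end{bmatrix}\in\mathbb{C}^{(n+p)\times(n+m)}$ for $\lambda\in\mathbb{C}$. The steady-state cascade (SSC) operators are defined as follows: for $H\in\mathbb{C}^{m\times\nu}$, $\mathcal{C}_{\rm p}(H)=C\Pi+DH$, where $\Pi\in\mathbb{C}^{n\times\nu}$ is the unique solution of the Sylvester equation $\Pi F - A\Pi = BH$; for $G\in\mathbb{C}^{\nu\times p}$, $\mathcal{C}_{\rm d}(G)=-MB+GD$, where $M\in\mathbb{C}^{\nu\times n}$ is the unique solution of $MA-FM=GC$. $\mathbb{C}_{\geq 0}$ is the set of complex numbers with nonnegative real part. For a matrix $H$ and subspace $\mathcal{V}$, $H\mathcal{V}=\{Hv:v\in\mathcal{V}\}$.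 A pair $(F,H)$ is detectable if every eigenvalue $\lambda$ of $F$ with $\mathrm{Re}\,\lambda\ge0$ is observable, i.e., $Hf\neq 0$ for every nonzero $f$ with $Ff=\lambda f$. *)

(* The field of complex numbers is modelled by an arbitrary
   numClosedFieldType C (algebraically closed, char 0, with real part 'Re);
   the statement is purely algebraic so this is a (harmless) generalization. *)
From HB Require Import structures.
From mathcomp Require Import all_boot all_order all_algebra.
From mathcomp Require Import boolp classical_sets.
Set Implicit Arguments. Unset Strict Implicit. Unset Printing Implicit Defensive.
Import Order.TTheory GRing.Theory Num.Theory.
Local Open Scope ring_scope.
Local Open Scope classical_set_scope.

Section Defs.
Variable C : numClosedFieldType.
Variables n m p nu : nat.

Definition rosenbrock (A : 'M[C]_n) (B : 'M[C]_(n, m)) (Cm : 'M[C]_(p, n))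
  (D : 'M[C]_(p, m)) (l : C) : 'M[C]_(n + p, n + m) :=
  block_mx (A - l%:M) B Cm D.

(* The (unique, when eig A and eig F are disjoint) solution Pi of
   Pi F - A Pi = X. *)
Definition sylv_p (A : 'M[C]_n) (F : 'M[C]_nu) (X : 'M[C]_(n, nu)) : 'M[C]_(n, nu) :=
  xget 0 [set Pi : 'M[C]_(n, nu) | Pi *m F - A *m Pi = X].

Definition sylv_d (A : 'M[C]_n) (F : 'M[C]_nu) (Y : 'M[C]_(nu, n)) : 'M[C]_(nu, n) :=
  xget 0 [set M : 'M[C]_(nu, n) | M *m A - F *m M = Y].

Definition Cp (A : 'M[C]_n) (B : 'M[C]_(n, m)) (Cm : 'M[C]_(p, n))
  (D : 'M[C]_(p, m)) (F : 'M[C]_nu) (H : 'M[C]_(m, nu)) : 'M[C]_(p, nu) :=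
  Cm *m sylv_p A F (B *m H) + D *m H.

Definition Cd (A : 'M[C]_n) (B : 'M[C]_(n, m)) (Cm : 'M[C]_(p, n))
  (D : 'M[C]_(p, m)) (F : 'M[C]_nu) (G : 'M[C]_(nu, p)) : 'M[C]_(nu, m) :=
  - (sylv_d A F (G *m Cm)) *m B + G *m D.

Definition obs_eig (q : nat) (F : 'M[C]_nu) (H : 'M[C]_(q, nu)) (l : C) : Prop :=
  forall f : 'cV[C]_nu, f != 0 -> F *m f = l *: f -> H *m f != 0.

(* (F, H) observable: every eigenvalue of F is observable (PBH test) *)
Definition observable (q : nat) (F : 'M[C]_nu) (H : 'M[C]_(q, nu)) : Prop :=
  forall l : C, obs_eig F H l.

Definition detectable (q : nat) (F : 'M[C]_nu) (H : 'M[C]_(q, nu)) : Prop :=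
  forall l : C, 0 <= 'Re l -> obs_eig F H l.

Definition image_ker_full (F : 'M[C]_nu) (H : 'M[C]_(m, nu)) (l : C) : Prop :=
  forall y : 'cV[C]_m, exists f : 'cV[C]_nu, (l%:M - F) *m f = 0 /\ H *m f = y.

End Defs.

(* Write the Rosenbrock matrix as the pencil [N - l E] and let
   [T Z = N Z - E Z F] act on (n+m) x nu matrices.  Conditions (ii) and (iv)
   say that T is injective: the first block row of [T Z = 0] is the Sylvester
   equation [Pi F - A Pi = B Psi], uniquely solvable because eig A and eig F
   are disjoint.  Conditions (iii) and (v) say that the adjoint of T for the
   trace pairing, [W |-> W N - F W E], is onto, which is again injectivity of
   T.  T sends every Z with [Z F = l Z] to [(N - l E) Z] and commutes with
   right multiplication by polynomials in F; by Cayley-Hamilton its kernel is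
   trivial iff it contains no such nonzero Z, i.e. iff (i) holds.
   For the observability statements, [F f = l f] gives
   [R(l) (Pi_H f; H f) = (0; Cp(H) f)], to which the PBH test applies. *)

From HB Require Import structures.
From mathcomp Require Import all_boot all_order all_algebra.
From mathcomp Require Import boolp classical_sets.
Import Order.TTheory GRing.Theory Num.Theory.
Local Open Scope ring_scope.

Set Implicit Arguments.
Unset Strict Implicit.
Unset Printing Implicit Defensive.

Section FieldFacts.
Variable K : fieldType.

Lemma noeigen_unitmx n (A : 'M[K]_n) l : ~ eigenvalue A l -> A - l%:M \in unitmx.
Proof. by move=> /negP; rewrite negbK kermx_eq0 row_free_unit. Qed.

Lemma noeigen_mulmx_eq0 n k (A : 'M[K]_n) l (X : 'M_(n, k)) :
  ~ eigenvalue A l -> (A - l%:M) *m X = 0 -> X = 0.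
Proof. by move=> /noeigen_unitmx hu hX; rewrite -(mulKmx hu X) hX mulmx0. Qed.

Lemma eigenvalue_tr n (A : 'M[K]_n) l : eigenvalue A^T l = eigenvalue A l.
Proof.
have eigE (B : 'M[K]_n) : eigenvalue B l = ~~ row_free (B - l%:M).
  by rewrite -kermx_eq0.
by rewrite !eigE /row_free -[in A^T - _]tr_scalar_mx -linearB /= mxrank_tr.
Qed.

Lemma eigenvalue_col n (A : 'M[K]_n) l (f : 'cV_n) :
  A *m f = l *: f -> f != 0 -> eigenvalue A l.
Proof.
move=> Af fnz; rewrite -eigenvalue_tr; apply/eigenvalueP; exists f^T => //.
  by rewrite -trmx_mul Af linearZ.
by rewrite trmx_eq0.
Qed.

Lemma full_col_rank_mulmx_eq0 a b k (R : 'M[K]_(a, b)) (Z : 'M_(b, k)) :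
  \rank R = b -> R *m Z = 0 -> Z = 0.
Proof.
move=> rR RZ; have freeRt : row_free R^T by rewrite /row_free mxrank_tr rR.
apply: trmx_inj; apply/eqP.
by rewrite linear0 -(mulmx_free_eq0 _ freeRt) -trmx_mul RZ linear0.
Qed.

Lemma rank_deficient_ker a b (R : 'M[K]_(a, b)) :
  \rank R != b -> exists2 z : 'cV_b, R *m z = 0 & z != 0.
Proof.
move=> rR; have /rowV0Pn [v /sub_kermxP Rv vnz] : kermx R^T != 0.
  by rewrite kermx_eq0 /row_free mxrank_tr.
exists v^T; last by rewrite trmx_eq0.
by apply: trmx_inj; rewrite trmx_mul trmxK Rv linear0.
Qed.

Lemma mxtrace_delta_mul a b (i : 'I_a) (j : 'I_b) (Z : 'M[K]_(a, b)) :
  \tr (delta_mx j i *m Z) = Z i j.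
Proof.
rewrite /mxtrace (bigD1 j) //= big1 ?addr0 => [|r rj].
  rewrite mxE (bigD1 i) //= big1 ?addr0 => [|s si]; first by rewrite mxE !eqxx mul1r.
  by rewrite mxE (negbTE si) andbF mul0r.
by rewrite mxE big1 // => s _; rewrite mxE (negbTE rj) mul0r.
Qed.

Lemma mxtrace_mul_eq0 a b (Z : 'M[K]_(a, b)) :
  (forall W : 'M_(b, a), \tr (W *m Z) = 0) -> Z = 0.
Proof. by move=> h; apply/matrixP => i j; rewrite mxE -mxtrace_delta_mul h. Qed.

Lemma mul_mxvec_tr a b (X Y : 'M[K]_(a, b)) :
  mxvec X *m (mxvec Y)^T = (\tr (X *m Y^T))%:M.
Proof.
apply/matrixP => i j; rewrite !ord1 !mxE /= (reindex _ (curry_mxvec_bij _ _)) /=.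
rewrite mulr1n /mxtrace; under [RHS]eq_bigr => i0 _ do rewrite mxE.
by rewrite pair_bigA; apply: eq_bigr => -[i0 j0] _ /=; rewrite !mxE !mxvecE.
Qed.

Lemma linear_inj_surj a b (f : {linear 'M[K]_(a, b) -> 'M[K]_(a, b)}) :
  (forall X, f X = 0 -> X = 0) -> forall Y, exists X, f X = Y.
Proof.
move=> kerf Y; have : row_free (lin_mx f).
  apply: inj_row_free => v fv; rewrite -[v]vec_mxK; apply/eqP.
  by rewrite mxvec_eq0; apply/eqP/kerf; rewrite -mx_rV_lin fv linear0.
rewrite row_free_unit => fu; exists (vec_mx (mxvec Y *m invmx (lin_mx f))).
by rewrite -mx_rV_lin mulmxKV // mxvecK.
Qed.

Lemma adjoint_inj_surj k l nu
    (T : {linear 'M[K]_(k, nu) -> 'M[K]_(l, nu)})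
    (U : {linear 'M[K]_(nu, l) -> 'M[K]_(nu, k)}) :
  (forall W Z, \tr (U W *m Z) = \tr (W *m T Z)) ->
  (forall Z, T Z = 0 -> Z = 0) <-> (forall Y, exists W, U W = Y).
Proof.
move=> adjTU; split => [kerT Y | surjU Z TZ]; last first.
  apply/matrixP => i j; have [W UW] := surjU (delta_mx j i).
  by rewrite mxE -mxtrace_delta_mul -UW adjTU TZ mulmx0 linear0.
have : row_full (lin_mx U).
  apply/negPn/negP => notfull.
  have /rowV0Pn [v /sub_kermxP Uv vnz] : kermx (lin_mx U)^T != 0.
    by rewrite kermx_eq0 /row_free mxrank_tr; exact: notfull.
  have Tv : T (vec_mx v)^T = 0.
    apply: mxtrace_mul_eq0 => W; rewrite -adjTU.
    have /matrixP/(_ ord0 ord0) := congr1 (mulmx (mxvec W)) (congr1 trmx Uv).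
    rewrite trmx_mul trmxK linear0 mulmx0 mulmxA mul_vec_lin -[v in v^T]vec_mxK.
    by rewrite mul_mxvec_tr !mxE mulr1n.
  have /(congr1 trmx) := kerT _ Tv; rewrite trmxK linear0 => v0.
  by move: vnz; rewrite -[v]vec_mxK v0 linear0 eqxx.
case/row_fullP => X hX; exists (vec_mx (mxvec Y *m X)).
by apply: (can_inj mxvecK); rewrite -mul_vec_lin vec_mxK -mulmxA hX mulmx1.
Qed.

End FieldFacts.

Section PencilMaps.
Variables (K : fieldType) (k l nu : nat).
Variables (E N : 'M[K]_(l, k)) (F : 'M[K]_nu).

Definition pencil_map (Z : 'M[K]_(k, nu)) : 'M[K]_(l, nu) := N *m Z - E *m Z *m F.
Definition pencil_comap (W : 'M[K]_(nu, l)) : 'M[K]_(nu, k) := W *m N - F *m W *m E.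

Fact pencil_map_is_linear : linear pencil_map.
Proof.
move=> c X Y; rewrite /pencil_map !mulmxDr mulmxDl -!scalemxAr -scalemxAl.
by rewrite scalerBr opprD addrACA.
Qed.

HB.instance Definition _ :=
  GRing.isLinear.Build K 'M[K]_(k, nu) 'M[K]_(l, nu) _
    pencil_map pencil_map_is_linear.

Fact pencil_comap_is_linear : linear pencil_comap.
Proof.
move=> c X Y; rewrite /pencil_comap mulmxDr !mulmxDl -scalemxAr -!scalemxAl.
by rewrite scalerBr opprD addrACA.
Qed.

HB.instance Definition _ :=
  GRing.isLinear.Build K 'M[K]_(nu, l) 'M[K]_(nu, k) _
    pencil_comap pencil_comap_is_linear.

Lemma pencil_mapM Z (X : 'M_nu) :
  X *m F = F *m X -> pencil_map (Z *m X) = pencil_map Z *m X.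
Proof.
by move=> FX; rewrite /pencil_map mulmxBl !mulmxA -(mulmxA _ X F) FX !mulmxA.
Qed.

Lemma pencil_map_eigen Z r :
  Z *m F = r *: Z -> pencil_map Z = (N - r *: E) *m Z.
Proof. by move=> ZF; rewrite /pencil_map -mulmxA ZF mulmxBl -scalemxAr scalemxAl. Qed.

Lemma pencil_map_mul_eigvec Z (f : 'cV_nu) r :
  F *m f = r *: f -> pencil_map Z *m f = (N - r *: E) *m (Z *m f).
Proof.
move=> Ff; rewrite /pencil_map mulmxBl -!mulmxA Ff -!scalemxAr mulmxBl.
by rewrite -scalemxAl.
Qed.

Lemma pencil_comap_adjoint W Z :
  \tr (pencil_comap W *m Z) = \tr (W *m pencil_map Z).
Proof.
rewrite /pencil_comap /pencil_map mulmxBl mulmxBr !linearB /= mulmxA.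
by congr (_ - _); rewrite -!mulmxA mxtrace_mulC !mulmxA.
Qed.

End PencilMaps.

Lemma trmx_pencil_comap (K : fieldType) k l nu (E N : 'M[K]_(l, k)) (F : 'M[K]_nu) W :
  (pencil_comap E N F W)^T = pencil_map E^T N^T F^T W^T.
Proof. by rewrite /pencil_comap /pencil_map linearB /= !trmx_mul mulmxA. Qed.

Section ClosedPencil.
Variables (K : closedFieldType) (k l nu : nat).
Variables (E N : 'M[K]_(l, k)) (F : 'M[K]_nu).
Local Notation T := (pencil_map E N F).

Lemma eigenvalue_prod_annihilates :
  exists2 rs : seq K, {in rs, forall r, eigenvalue F r} &
    \prod_(r <- rs) (F - r%:M) = 0.
Proof.
case: nu F => [|nu'] F'.
  by exists [::] => //; rewrite big_nil; apply/matrixP => -[].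
have [rs charF] := closed_field_poly_normal (char_poly F').
rewrite (monicP (char_poly_monic F')) scale1r in charF.
exists rs => [r rs_r|].
  by rewrite eigenvalue_root_char charF root_prod_XsubC.
rewrite -(Cayley_Hamilton F') charF rmorph_prod /=.
by apply: eq_bigr => r _; rewrite rmorphB /= horner_mx_X horner_mx_C.
Qed.

Lemma pencil_map_inj :
  (forall r, eigenvalue F r -> \rank (N - r *: E) = k) <->
  (forall Z, T Z = 0 -> Z = 0).
Proof.
split => [fullN Z TZ | kerT r Fr].
  have [rs Frs /(congr1 (mulmx Z))] := eigenvalue_prod_annihilates.
  rewrite mulmx0; elim: rs Frs Z TZ => [|r rs IH] Frs Z TZ.
    by rewrite big_nil mulmx1.
  have Fr : eigenvalue F r by apply: Frs; rewrite mem_head.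
  have {}Frs : {in rs, forall s, eigenvalue F s}.
    by move=> s rs_s; apply: Frs; rewrite inE rs_s orbT.
  rewrite big_cons -mulmxE mulmxA => /IH-/(_ Frs) ZF0.
  have /eqP : Z *m (F - r%:M) = 0.
    by apply: ZF0; rewrite (pencil_mapM E N) ?TZ ?mul0mx // mulmxBl mulmxBr scalar_mxC.
  rewrite mulmxBr subr_eq0 mul_mx_scalar => /eqP ZF.
  by apply: (full_col_rank_mulmx_eq0 (fullN r Fr)); rewrite -(pencil_map_eigen E N ZF).
apply/eqP; apply: contraT => /rank_deficient_ker [z Rz znz].
have [g gF gnz] := eigenvalueP Fr.
have zgF : z *m g *m F = r *: (z *m g) by rewrite -mulmxA gF scalemxAr.
have /kerT/eqP : T (z *m g) = 0 by rewrite (pencil_map_eigen E N zgF) mulmxA Rz mul0mx.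
by rewrite mulmx_free_eq0 ?(negbTE znz) // /row_free rank_rV gnz.
Qed.

End ClosedPencil.

Lemma sylvester_hom_eq0 (K : closedFieldType) n nu (A : 'M[K]_n) (F : 'M[K]_nu) :
  (forall l, ~ (eigenvalue A l /\ eigenvalue F l)) ->
  forall Pi, pencil_map 1%:M A F Pi = 0 -> Pi = 0.
Proof.
move=> hAF; apply/pencil_map_inj => r Fr; rewrite scalemx1.
apply/eqP; rewrite -/(row_free _) row_free_unit noeigen_unitmx // => Ar.
exact: hAF (conj Ar Fr).
Qed.

Section Sylvester.
Variables (K : numClosedFieldType) (n nu : nat) (A : 'M[K]_n) (F : 'M[K]_nu).
Hypothesis hAF : forall l, ~ (eigenvalue A l /\ eigenvalue F l).

Lemma pencil_map1 Pi : pencil_map 1%:M A F Pi = - (Pi *m F - A *m Pi).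
Proof. by rewrite /pencil_map mul1mx opprB. Qed.

Lemma sylv_pP X : sylv_p A F X *m F - A *m sylv_p A F X = X.
Proof.
rewrite /sylv_p; set S := (X in xget _ X); suff : S (xget 0 S) by []; apply: xgetPex.
have [Pi TPi] := linear_inj_surj (sylvester_hom_eq0 hAF) (- X).
by exists Pi; rewrite /S /= -[X]opprK -TPi /= pencil_map1 opprK.
Qed.

Lemma sylv_p_unique X Pi : Pi *m F - A *m Pi = X -> sylv_p A F X = Pi.
Proof.
move=> PiX; apply/eqP; rewrite -subr_eq0; apply/eqP/(sylvester_hom_eq0 hAF).
by rewrite linearB /= !pencil_map1 sylv_pP PiX subrr.
Qed.

Lemma pencil_comap1 M : pencil_comap 1%:M A F M = M *m A - F *m M.
Proof. by rewrite /pencil_comap mulmx1. Qed.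

Lemma sylv_dP Y : sylv_d A F Y *m A - F *m sylv_d A F Y = Y.
Proof.
rewrite /sylv_d; set S := (X in xget _ X); suff : S (xget 0 S) by []; apply: xgetPex.
have [M TM] := (adjoint_inj_surj (pencil_comap_adjoint 1%:M A F)).1
  (sylvester_hom_eq0 hAF) Y.
by exists M; rewrite /S /= -TM /= pencil_comap1.
Qed.

Lemma sylv_d_unique Y M : M *m A - F *m M = Y -> sylv_d A F Y = M.
Proof.
move=> MY; apply/eqP; rewrite -subr_eq0; apply/eqP/trmx_inj; rewrite linear0.
apply: (@sylvester_hom_eq0 _ _ _ A^T F^T) => [l [/[!eigenvalue_tr] Al Fl]|].
  exact: (hAF (conj Al Fl)).
rewrite -trmx1 -trmx_pencil_comap (linearB (pencil_comap _ _ _)) /=.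
by rewrite !pencil_comap1 sylv_dP MY subrr linear0.
Qed.

End Sylvester.

Section SteadyStateCascade.
Variables (K : numClosedFieldType) (n m p nu : nat).
Variables (A : 'M[K]_n) (B : 'M[K]_(n, m)) (Cm : 'M[K]_(p, n)) (D : 'M[K]_(p, m)).
Variable F : 'M[K]_nu.
Hypothesis hAF : forall l, ~ (eigenvalue A l /\ eigenvalue F l).

Local Notation E := (block_mx 1%:M 0 0 0 : 'M[K]_(n + p, n + m)).
Local Notation N := (block_mx A B Cm D).
Local Notation T := (pencil_map E N F).
Local Notation U := (pencil_comap E N F).
Local Notation R := (rosenbrock A B Cm D).
Local Notation Pi_ H := (sylv_p A F (B *m H)).
Local Notation M_ G := (sylv_d A F (G *m Cm)).

Lemma rosenbrockE l : R l = N - l *: E.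
Proof.
rewrite /rosenbrock scale_block_mx opp_block_mx add_block_mx scalemx1.
by rewrite !scaler0 !oppr0 !addr0.
Qed.

Lemma eigenvalueF_mulmx_eq0 l k (X : 'M_(n, k)) :
  eigenvalue F l -> (A - l%:M) *m X = 0 -> X = 0.
Proof. by move=> Fl; apply: noeigen_mulmx_eq0 => Al; apply: (hAF (conj Al Fl)). Qed.

Lemma pencil_map_col Pi Psi :
  T (col_mx Pi Psi) = col_mx (A *m Pi + B *m Psi - Pi *m F) (Cm *m Pi + D *m Psi).
Proof.
rewrite /pencil_map !mul_block_col !mul0mx !mul1mx !addr0 mul_col_mx mul0mx.
by rewrite opp_col_mx add_col_mx oppr0 addr0.
Qed.

Lemma pencil_comap_row M G :
  U (row_mx M G) = row_mx (M *m A + G *m Cm - F *m M) (M *m B + G *m D).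
Proof.
rewrite /pencil_comap !mul_row_block mul_mx_row mul_row_block.
by rewrite !mulmx0 !mulmx1 !addr0 opp_row_mx add_row_mx oppr0 addr0.
Qed.

Lemma rank_rosenbrock_pencil_inj :
  (forall l, eigenvalue F l -> \rank (R l) = (n + m)%N) <->
  (forall Z, T Z = 0 -> Z = 0).
Proof.
rewrite -pencil_map_inj; split=> fullR l Fl; first by rewrite -rosenbrockE fullR.
by rewrite rosenbrockE fullR.
Qed.

Lemma pencil_comap_surj :
  (forall Y, exists W, U W = Y) <-> (forall Z, T Z = 0 -> Z = 0).
Proof. exact: iff_sym (adjoint_inj_surj (pencil_comap_adjoint E N F)). Qed.

Lemma regulator_eqs_pencil Pi Psi P Q :
  T (col_mx Pi Psi) = - col_mx P Q <->
  Pi *m F = A *m Pi + B *m Psi + P /\ 0 = Cm *m Pi + D *m Psi + Q.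
Proof.
rewrite pencil_map_col opp_col_mx; split => [/eq_col_mx [e1 e2] | [e1 e2]].
  split; last by rewrite e2 addNr.
  by rewrite -[P]opprK -e1 opprB addrC subrK.
congr col_mx; first by rewrite e1 opprD addrA subrr add0r.
by apply/eqP; rewrite -addr_eq0 -e2.
Qed.

Lemma dual_regulator_eqs_pencil M G Pb Qb :
  U (row_mx M (- G)) = row_mx Pb Qb <->
  M *m A = F *m M + G *m Cm + Pb /\ 0 = - M *m B + G *m D + Qb.
Proof.
rewrite pencil_comap_row !mulNmx; split => [/eq_row_mx [<- <-] | [e1 e2]].
  by split; [rewrite addrC addrA !subrK | rewrite addrACA addNr subrr addr0].
congr row_mx; first by rewrite e1 (addrAC _ (G *m Cm)) addrK (addrC (F *m M)) addrK.
by move/eqP: e2; rewrite eq_sym addrC addr_eq0 opprD opprK => /eqP ->.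
Qed.

Lemma pencil_map_sylv H : T (col_mx (Pi_ H) H) = col_mx 0 (Cp A B Cm D F H).
Proof.
have := sylv_pP hAF (B *m H); rewrite pencil_map_col /Cp; set Pi := sylv_p _ _ _ => PiH.
by rewrite -PiH addrCA subrr addr0 subrr.
Qed.

Lemma pencil_map_col0 Pi Psi Y :
  T (col_mx Pi Psi) = col_mx 0 Y -> Pi = Pi_ Psi /\ Y = Cp A B Cm D F Psi.
Proof.
rewrite pencil_map_col => /eq_col_mx [/eqP e1 <-].
suff PiE : Pi_ Psi = Pi by rewrite /Cp PiE.
apply: (sylv_p_unique hAF); move: e1; rewrite subr_eq0 => /eqP <-.
by rewrite addrAC subrr add0r.
Qed.

Lemma pencil_comap_sylv G : U (row_mx (M_ G) (- G)) = row_mx 0 (- Cd A B Cm D F G).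
Proof.
have := sylv_dP hAF (G *m Cm); rewrite pencil_comap_row /Cd; set M := sylv_d _ _ _ => MG.
by rewrite !mulNmx addrAC MG subrr opprD opprK.
Qed.

Lemma pencil_comap_row0 M G Y :
  U (row_mx M G) = row_mx 0 Y -> Y = - Cd A B Cm D F (- G).
Proof.
rewrite pencil_comap_row => /eq_row_mx [/eqP e1 <-].
suff ME : M_ (- G) = M by rewrite /Cd ME opprD !mulNmx !opprK.
by apply: (sylv_d_unique hAF); move: e1; rewrite addrAC addr_eq0 mulNmx => /eqP.
Qed.

Lemma regulator_unique_pencil_inj :
  (forall P Q Pi1 Pi2 Psi1 Psi2,
      Pi1 *m F = A *m Pi1 + B *m Psi1 + P -> 0 = Cm *m Pi1 + D *m Psi1 + Q ->
      Pi2 *m F = A *m Pi2 + B *m Psi2 + P -> 0 = Cm *m Pi2 + D *m Psi2 + Q ->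
      Pi1 = Pi2 /\ Psi1 = Psi2) <->
  (forall Z, T Z = 0 -> Z = 0).
Proof.
split => [uniq Z TZ | kerT P Q Pi1 Pi2 Psi1 Psi2 e1 e2 e3 e4].
  have T00 Pi Psi : T (col_mx Pi Psi) = 0 ->
      Pi *m F = A *m Pi + B *m Psi + 0 /\ 0 = Cm *m Pi + D *m Psi + 0.
    by move=> TPi; apply/regulator_eqs_pencil; rewrite TPi col_mx0 oppr0.
  have /T00 [Zu Zd] : T (col_mx (usubmx Z) (dsubmx Z)) = 0 by rewrite vsubmxK.
  have /T00 [S0u S0d] : T (col_mx 0 0) = 0 by rewrite col_mx0 linear0.
  rewrite -[Z]vsubmxK; have [-> ->] := uniq _ _ _ _ _ _ Zu Zd S0u S0d.
  exact: col_mx0.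
have /(raddf_inj kerT) : T (col_mx Pi1 Psi1) = T (col_mx Pi2 Psi2).
  by rewrite (regulator_eqs_pencil _ _ P Q).2 // (regulator_eqs_pencil _ _ P Q).2.
exact: eq_col_mx.
Qed.

Lemma dual_regulator_solvable_pencil_inj :
  (forall Pb Qb, exists M G,
      M *m A = F *m M + G *m Cm + Pb /\ 0 = - M *m B + G *m D + Qb) <->
  (forall Z, T Z = 0 -> Z = 0).
Proof.
apply: (iff_trans _ pencil_comap_surj).
split => [solv Y | surjU Pb Qb].
  have [M [G /dual_regulator_eqs_pencil UMG]] := solv (lsubmx Y) (rsubmx Y).
  by exists (row_mx M (- G)); rewrite UMG hsubmxK.
have [W UW] := surjU (row_mx Pb Qb); exists (lsubmx W), (- rsubmx W).
by apply/dual_regulator_eqs_pencil; rewrite opprK hsubmxK.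
Qed.

Lemma Cp_inj_pencil_inj :
  injective (Cp A B Cm D F) <-> (forall Z, T Z = 0 -> Z = 0).
Proof.
have [Pi0 Cp0] : 0 = Pi_ 0 /\ 0 = Cp A B Cm D F 0.
  by apply: pencil_map_col0; rewrite !col_mx0 linear0.
split => [injCp Z | kerT H1 H2 CpH].
  move=> TZ; have /pencil_map_col0 [Zu] : T (col_mx (usubmx Z) (dsubmx Z)) = col_mx 0 0.
    by rewrite vsubmxK TZ col_mx0.
  rewrite Cp0 => /injCp/esym Zd; rewrite Zd -Pi0 in Zu.
  by rewrite -[Z]vsubmxK Zu Zd col_mx0.
have /(raddf_inj kerT) : T (col_mx (Pi_ H1) H1) = T (col_mx (Pi_ H2) H2).
  by rewrite !pencil_map_sylv CpH.
by case/eq_col_mx.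
Qed.

Lemma Cd_surj_pencil_inj :
  (forall Y, exists G, Cd A B Cm D F G = Y) <-> (forall Z, T Z = 0 -> Z = 0).
Proof.
apply: (iff_trans _ pencil_comap_surj).
split => [surjCd Y | surjU Y].
  pose M0 := sylv_d A F (lsubmx Y).
  have UM0 : U (row_mx M0 0) = row_mx (lsubmx Y) (M0 *m B).
    by rewrite pencil_comap_row !mul0mx !addr0 sylv_dP.
  have [G CdG] := surjCd (M0 *m B - rsubmx Y).
  exists (row_mx M0 0 + row_mx (M_ G) (- G)).
  rewrite linearD /= UM0 pencil_comap_sylv CdG add_row_mx addr0 opprB.
  by rewrite addrCA subrr addr0 hsubmxK.
have [W UW] := surjU (row_mx 0 (- Y)).
have /pencil_comap_row0 CdW : U (row_mx (lsubmx W) (rsubmx W)) = row_mx 0 (- Y).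
  by rewrite hsubmxK.
by exists (- rsubmx W); apply: oppr_inj; rewrite -CdW.
Qed.

Lemma rosenbrock_mul_sylv H (f : 'cV_nu) l : F *m f = l *: f ->
  R l *m col_mx (Pi_ H *m f) (H *m f) = col_mx 0 (Cp A B Cm D F H *m f).
Proof.
move=> Ff; rewrite rosenbrockE -mul_col_mx -(pencil_map_mul_eigvec _ _ _ Ff).
by rewrite pencil_map_sylv mul_col_mx mul0mx.
Qed.

Lemma obs_eig_Cp H l : obs_eig F H l ->
  (eigenvalue F l -> \rank (R l) = (n + m)%N) -> obs_eig F (Cp A B Cm D F H) l.
Proof.
move=> obsH fullR f fnz Ff; apply: contraNneq (obsH f fnz Ff) => Cpf0.
have := rosenbrock_mul_sylv H Ff; rewrite Cpf0 col_mx0.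
move/(full_col_rank_mulmx_eq0 (fullR (eigenvalue_col Ff fnz)))/eqP.
by rewrite col_mx_eq0 => /andP[].
Qed.

Lemma obs_eig_of_Cp H l : obs_eig F (Cp A B Cm D F H) l -> obs_eig F H l.
Proof.
move=> obsCp f fnz Ff; apply: contraNneq (obsCp f fnz Ff) => Hf0.
have := rosenbrock_mul_sylv H Ff; rewrite Hf0 /rosenbrock mul_block_col !mulmx0 !addr0.
case/eq_col_mx => /(eigenvalueF_mulmx_eq0 (eigenvalue_col Ff fnz)) ->.
by rewrite mulmx0 => <-.
Qed.

Lemma rank_rosenbrock_of_Cp H l : eigenvalue F l -> image_ker_full F H l ->
  obs_eig F (Cp A B Cm D F H) l -> \rank (R l) = (n + m)%N.
Proof.
move=> Fl imH obsCp; apply/eqP; apply: contraT => /rank_deficient_ker [z Rz znz].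
have [f [/eqP Ff Hf]] := imH (dsubmx z).
rewrite mulmxBl mul_scalar_mx subr_eq0 eq_sym in Ff; move/eqP: Ff => Ff.
have fnz : f != 0.
  apply: contraNneq znz => f0; move: Rz; rewrite -[z]vsubmxK -Hf f0 mulmx0.
  rewrite /rosenbrock mul_block_col !mulmx0 !addr0.
  move/eqP; rewrite col_mx_eq0 => /andP[/eqP/(eigenvalueF_mulmx_eq0 Fl) -> _].
  by rewrite col_mx0.
(* Compare the kernel vector z = (x; H f) of R(l) with (Pi_H f; H f). *)
have : R l *m col_mx (Pi_ H *m f - usubmx z) 0 = col_mx 0 (Cp A B Cm D F H *m f).
  rewrite -(subrr (dsubmx z)) -add_col_mx -opp_col_mx vsubmxK mulmxDr mulmxN Rz.
  by rewrite oppr0 addr0 -Hf (rosenbrock_mul_sylv H Ff).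
rewrite /rosenbrock mul_block_col !mulmx0 !addr0.
case/eq_col_mx => /(eigenvalueF_mulmx_eq0 Fl) -> Cpf0.
by move: (obsCp f fnz Ff); rewrite -Cpf0 mulmx0 eqxx.
Qed.

End SteadyStateCascade.

Theorem theorem2 (C : numClosedFieldType) (n m p nu : nat)
  (A : 'M[C]_n) (B : 'M[C]_(n, m)) (Cm : 'M[C]_(p, n)) (D : 'M[C]_(p, m))
  (F : 'M[C]_nu)
  (hAF : forall l : C, ~ (eigenvalue A l /\ eigenvalue F l)) :
  [<->
    (* (i) *)
    (forall l : C, eigenvalue F l -> \rank (rosenbrock A B Cm D l) = (n + m)%N);
    (* (ii) *)
    (forall (P : 'M[C]_(n, nu)) (Q : 'M[C]_(p, nu))
            (Pi1 Pi2 : 'M[C]_(n, nu)) (Psi1 Psi2 : 'M[C]_(m, nu)),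
        Pi1 *m F = A *m Pi1 + B *m Psi1 + P -> 0 = Cm *m Pi1 + D *m Psi1 + Q ->
        Pi2 *m F = A *m Pi2 + B *m Psi2 + P -> 0 = Cm *m Pi2 + D *m Psi2 + Q ->
        Pi1 = Pi2 /\ Psi1 = Psi2);
    (* (iii) *)
    (forall (Pb : 'M[C]_(nu, n)) (Qb : 'M[C]_(nu, m)),
        exists (M : 'M[C]_(nu, n)) (G : 'M[C]_(nu, p)),
          M *m A = F *m M + G *m Cm + Pb /\ 0 = - M *m B + G *m D + Qb);
    (* (iv) *)
    injective (Cp A B Cm D F);
    (* (v) *)
    (forall Y : 'M[C]_(nu, m), exists G : 'M[C]_(nu, p), Cd A B Cm D F G = Y)
  ]
  /\
  (forall H : 'M[C]_(m, nu),
    (* (a) *)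
    (observable F H ->
       (forall l : C, eigenvalue F l -> \rank (rosenbrock A B Cm D l) = (n + m)%N) ->
       observable F (Cp A B Cm D F H))
    /\
    (* (b) *)
    (detectable F H ->
       (forall l : C, eigenvalue F l -> 0 <= 'Re l ->
          \rank (rosenbrock A B Cm D l) = (n + m)%N) ->
       detectable F (Cp A B Cm D F H))
    /\
    (* converse of (a) *)
    ((forall l : C, eigenvalue F l -> image_ker_full F H l) ->
       observable F (Cp A B Cm D F H) ->
       observable F H /\
       (forall l : C, eigenvalue F l -> \rank (rosenbrock A B Cm D l) = (n + m)%N))
    /\
    (* converse of (b) *)
    ((forall l : C, eigenvalue F l -> 0 <= 'Re l -> image_ker_full F H l) ->
       detectable F (Cp A B Cm D F H) ->
       detectable F H /\
       (forall l : C, eigenvalue F l -> 0 <= 'Re l ->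
          \rank (rosenbrock A B Cm D l) = (n + m)%N))).
Proof.
have e1 := @rank_rosenbrock_pencil_inj _ _ _ _ _ A B Cm D F.
have e2 := @regulator_unique_pencil_inj _ _ _ _ _ A B Cm D F.
have e3 := @dual_regulator_solvable_pencil_inj _ _ _ _ _ A B Cm D F.
have e4 := @Cp_inj_pencil_inj _ _ _ _ _ A B Cm D F hAF.
have e5 := @Cd_surj_pencil_inj _ _ _ _ _ A B Cm D F hAF.
split; first by tfae=> [/e1/e2 | /e2/e3 | /e3/e4 | /e4/e5 | /e5/e1].
move=> H; split; [|split; [|split]].
- move=> obsH fullR l; exact (obs_eig_Cp hAF (obsH l) (fullR l)).
- move=> detH fullR l Rel; exact (obs_eig_Cp hAF (detH l Rel) (fun Fl => fullR l Fl Rel)).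
- move=> imH obsCp; split=> [l | l Fl]; first exact (obs_eig_of_Cp hAF (obsCp l)).
  exact (rank_rosenbrock_of_Cp hAF Fl (imH l Fl) (obsCp l)).
- move=> imH detCp; split=> [l Rel | l Fl Rel].
    exact (obs_eig_of_Cp hAF (detCp l Rel)).
  exact (rank_rosenbrock_of_Cp hAF Fl (imH l Fl Rel) (detCp l Rel)).
Qed.
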